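(* Assume $f\in C(\Omega;L^1(I))$. Let $\alpha^*\in C(\Omega,\mathbb{R}^{N-1})$ be the minimizer of $\mathcal L$ over $C(\Omega,\mathbb{R}^{N-1})$ (equivalently $\alpha^*=A^{-1}F$), and for each $n$ let $\widehat\alpha(n)\in\mathcal N_n$ be a minimizer of $\mathcal L$ over $\mathcal N_n$. Then \[ \|\alpha^*-\widehat\alpha(n)\|_{L^2(\Omega)}\to 0\quad\text{as } n\to\infty. \]
   Context: Let $I=(-1,1)$, $\nu\ge0$, $\Omega=[a,b]^d$ with $a,b>0$, equipped with the uniform probability measure, and let $f(x;\omega)$, $x\in I$, $\omega\in\Omega$, be an external force. Let $L_k$ be the $k$-th Legendre polynomial and $\phi_k=L_k+a_kL_{k+1}+b_kL_{k+2}$, $k=1,\dots,N-1$ (with $a_k,b_k$ chosen so that the $\phi_k$ satisfy the boundary conditions). Define $S_{ij}=\int_I\phi_i'\phi_j'\,dx$, $M_{ij}=\int_I\phi_i\phi_j\,dx$, $F_j(\omega)=\int_I f(x;\omega)\phi_j(x)\,dx$, and $A=S+\nu M$; $A$ is assumed symmetric and non-singular. The population loss is $\mathcal L(\alpha)=\|A\alpha(\omega)-F(\omega)\|^2_{L^2(\Omega)}=\int_\Omega|A\alpha(\omega)-F(\omega)|^2\,d\omega$ for $\alpha:\Omega\to\mathbb{R}^{N-1}$. Neural network classes: let $\mathcal N_n^*$ be a nested sequence ($\mathcal N_n^*\subset\mathcal N^*_{n+1}$) of classes of feed-forward neural networks $\mathbb{R}^d\to\mathbb{R}^{N-1}$ with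 the universal approximation property: for every compact $K$ and $g\in C(K,\mathbb{R}^{N-1})$, $\lim_n\inf_{\hat g\in\mathcal N_n^*}\|\hat g-g\|_{C(K)}=0$. Let $C_\alpha>\sup_\Omega|\alpha^*|$, let $\sigma^*$ be a bounded activation function with continuous inverse, $\sigma_\pm=\sup/\inf\sigma^*$, $h$ the affine map $[\sigma_-,\sigma_+]\to[-C_\alpha,C_\alpha]$ with $h(\sigma_\pm)=\pm C_\alpha$, and $\mathcal N_n=\{h\circ\sigma^*(g):g\in\mathcal N_n^*\}$ (componentwise). Minimizers over $\mathcal N_n$ are assumed to exist. *)

From HB Require Import structures.
From mathcomp Require Import all_boot all_order all_algebra.
From mathcomp Require Import all_classical all_reals all_analysis.
Set Implicit Arguments. Unset Strict Implicit. Unset Printing Implicit Defensive.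
Import Order.TTheory GRing.Theory Num.Theory.
Import numFieldNormedType.Exports.
Local Open Scope classical_set_scope.
Local Open Scope ring_scope.

Section Defs.
Variable R : realType.

(* Legendre polynomials via Bonnet's recurrence:
   L_0 = 1, L_1 = X, (k+2) L_{k+2} = (2k+3) X L_{k+1} - (k+1) L_k.
   legendre_pair k = (L_k, L_{k+1}). *)
Fixpoint legendre_pair (k : nat) : {poly R} * {poly R} :=
  match k with
  | 0%N => (1, 'X)
  | k'.+1 => let: (p, q) := legendre_pair k' in
             (q, (k'.+2)%:R^-1 *: ((2 * k' + 3)%:R *: ('X * q) - (k'.+1)%:R *: p))
  end.

Definition legendre (k : nat) : {poly R} := (legendre_pair k).1.

Definition phi (ak bk : nat -> R) (k : nat) : {poly R} :=
  legendre k + ak k *: legendre k.+1 + bk k *: legendre k.+2.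

Definition Iset : set R := [set x | -1 < x < 1].

(* Matrices indexed by k = 1..N-1 (index i : 'I_(N.-1) stands for k = i+1). *)
Definition Smat (ak bk : nat -> R) (N : nat) : 'M[R]_(N.-1) :=
  \matrix_(i, j) Rintegral lebesgue_measure Iset
     (fun x => (phi ak bk i.+1)^`().[x] * (phi ak bk j.+1)^`().[x]).

Definition Mmat (ak bk : nat -> R) (N : nat) : 'M[R]_(N.-1) :=
  \matrix_(i, j) Rintegral lebesgue_measure Iset
     (fun x => (phi ak bk i.+1).[x] * (phi ak bk j.+1).[x]).

Definition Amat (nu : R) (ak bk : nat -> R) (N : nat) : 'M[R]_(N.-1) :=
  Smat ak bk N + nu *: Mmat ak bk N.

Definition Fvec (d : nat) (ak bk : nat -> R) (N : nat) (f : 'rV[R]_d -> R -> R)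
  (w : 'rV[R]_d) : 'cV[R]_(N.-1) :=
  \col_j Rintegral lebesgue_measure Iset (fun x => f w x * (phi ak bk j.+1).[x]).

Definition enorm (n : nat) (v : 'cV[R]_n) : R := Num.sqrt (\sum_i v i 0 ^+ 2).

Definition Omega (d : nat) (a b : R) : set 'rV[R]_d :=
  [set w | forall i, a <= w 0 i <= b].

Fixpoint cube_int (lo hi : R) (d : nat) : ('rV[R]_d -> R) -> R :=
  match d with
  | 0%N => fun g => g 0
  | d'.+1 => fun g : 'rV[R]_d'.+1 -> R =>
      Rintegral (@lebesgue_measure R) [set t : R | lo <= t <= hi]
      (fun t : R => cube_int lo hi
         (fun y : 'rV[R]_d' => g (row_mx (const_mx t : 'rV[R]_1) y)))
  end.

(* integral w.r.t. the uniform probability measure on [lo,hi]^d *)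
Definition Eunif (lo hi : R) (d : nat) (g : 'rV[R]_d -> R) : R :=
  cube_int lo hi g / (hi - lo) ^+ d.

Definition loss (lo hi : R) (d N : nat) (A : 'M[R]_(N.-1))
  (F : 'rV[R]_d -> 'cV[R]_(N.-1)) (alpha : 'rV[R]_d -> 'cV[R]_(N.-1)) : R :=
  Eunif lo hi (fun w => enorm (A *m alpha w - F w) ^+ 2).

Definition L2dist (lo hi : R) (d N : nat) (alpha beta : 'rV[R]_d -> 'cV[R]_(N.-1)) : R :=
  Num.sqrt (Eunif lo hi (fun w => enorm (alpha w - beta w) ^+ 2)).

Definition cont_L1 (d : nat) (Om : set 'rV[R]_d) (f : 'rV[R]_d -> R -> R) : Prop :=
  (forall w, Om w -> lebesgue_measure.-integrable Iset (fun x => (f w x)%:E)) /\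
  (forall w0, Om w0 ->
     (fun w => Rintegral lebesgue_measure Iset (fun x => `|f w x - f w0 x|))
       @ within Om (nbhs w0) --> 0).

Definition universal_approx (d N : nat)
  (Nstar : nat -> set ('rV[R]_d -> 'cV[R]_(N.-1))) : Prop :=
  forall (K : set 'rV[R]_d), compact K ->
  forall g : 'rV[R]_d -> 'cV[R]_(N.-1), {within K, continuous g} ->
  forall eps : R, 0 < eps ->
    \forall n \near \oo, exists2 gh, Nstar n gh &
       forall x, K x -> enorm (gh x - g x) < eps.

Definition sigma_plus (sigma : R -> R) : R := sup (range sigma).
Definition sigma_minus (sigma : R -> R) : R := inf (range sigma).

(* affine h : [sigma_-, sigma_+] -> [-C, C], h(sigma_+-) = +-C *)
Definition haff (C : R) (sigma : R -> R) (s : R) : R :=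
  - C + 2 * C * (s - sigma_minus sigma) / (sigma_plus sigma - sigma_minus sigma).

Definition NNclass (d N : nat) (C : R) (sigma : R -> R)
  (Nstar : nat -> set ('rV[R]_d -> 'cV[R]_(N.-1))) (n : nat)
  : set ('rV[R]_d -> 'cV[R]_(N.-1)) :=
  [set (fun w => map_mx (haff C sigma \o sigma) (g w)) | g in Nstar n].

End Defs.

Arguments Omega {R} d a b _.

(* The loss is equivalent to the squared L2 distance to alpha_star, the minimizer
   A^-1 F at which the residual vanishes: loss(beta) <= 2 K(A) |beta - alpha_star|^2
   and |alpha_star - beta|^2 <= 2 K(A^-1) loss(beta), where K(M) is the sum of the
   squared absolute row sums of M.  Hence |alpha_star - alpha_hat(n)|^2 is at most
   4 K(A^-1) K(A) |beta - alpha_star|^2 for every beta in N_n, and it suffices to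
   find beta in N_n uniformly close to alpha_star.  The range of the continuous,
   injective, bounded sigma is an interval containing ]sigma_-, sigma_+[, and
   |alpha_star| < C_alpha, so alpha_star = h (sigma g) where g = sigma^-1 (h^-1
   alpha_star) is continuous with values in a compact set; approximating g
   uniformly in N*_n and using the uniform continuity of h o sigma on that compact
   set gives beta.
   Integrals over the cube are iterated one-dimensional integrals: by induction on
   the dimension they are linear and positive on continuous functions, the inner
   integral being continuous in the outer variable by uniform continuity. *)

From mathcomp Require Import all_boot all_order all_algebra.
From mathcomp Require Import all_classical all_reals all_analysis.
From mathcomp Require Import ring lra.
Import Order.TTheory GRing.Theory Num.Theory.
Import numFieldNormedType.Exports.
Local Open Scope classical_set_scope.
Local Open Scope ring_scope.
Set Implicit Arguments. Unset Strict Implicit.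

Section continuity.
Variable R : realType.
Implicit Types V W X : normedModType R.

Lemma within_continuousP V W (K : set V) (g : V -> W) :
  {within K, continuous g} <->
  (forall x, K x -> forall e, 0 < e -> exists2 del, 0 < del &
     forall y, K y -> `|x - y| < del -> `|g x - g y| < e).
Proof.
rewrite subspace_continuousP; split => [gc x Kx e e0|gc x Kx].
  have /cvgrPdist_lt/(_ e e0)/nbhs_normP[del del0 gdel] := gc x Kx.
  by exists del => // y Ky xy; apply: gdel.
apply/cvgrPdist_lt => e /(gc x Kx)[del del0 gdel].
by apply/nbhs_normP; exists del => //= y xy Ky; apply: gdel.
Qed.

Lemma within_continuous_comp_within V W X (A : set V) (S : set W)
    (u : V -> W) (s : W -> X) :
  {within A, continuous u} -> (forall x, A x -> S (u x)) ->
  {within S, continuous s} -> {within A, continuous (s \o u)}.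
Proof.
move=> /within_continuousP uc AS /within_continuousP sc.
apply/within_continuousP => x Ax e /(sc _ (AS x Ax))[d1 d10 sd1].
have [d2 d20 ud2] := uc x Ax d1 d10.
by exists d2 => // y Ay xy; apply: sd1; [exact: AS|exact: ud2].
Qed.

Lemma compact_unif_continuous V W (K D : set V) (g : V -> W) :
  compact K -> K `<=` D -> {within D, continuous g} ->
  forall e, 0 < e -> exists2 del, 0 < del &
    forall x y, K x -> D y -> `|x - y| < del -> `|g x - g y| < e.
Proof.
move=> cK KD /within_continuousP gc e e0.
have e2 : 0 < e / 2 by rewrite divr_gt0.
have : \forall del \near (0 : R), K `<=` (fun x => K x -> forall y, D y ->
    `|x - y| < `|del| -> `|g x - g y| < e).
  apply: (proj1 (compact_near_coveringP K) cK R (nbhs (0 : R))) => x Kx.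
  have [dx dx0 gdx] := gc x (KD x Kx) _ e2.
  have dx2 : 0 < dx / 2 by rewrite divr_gt0.
  exists ([set x' | `|x - x'| < dx / 2], [set del : R | `|del| < dx / 2]).
    split; apply/nbhs_normP; exists (dx / 2) => //= z; rewrite /ball_ //=.
    by rewrite sub0r normrN.
  case=> x' del /= [xx' deldx] Kx' y Dy x'y.
  have xy : `|x - y| < dx.
    rewrite -(subrKA x') (splitr dx); apply: le_lt_trans (ler_normD _ _) _.
    by rewrite ltrD // (lt_trans x'y).
  have gxx' : `|g x - g x'| < e / 2.
    apply: gdx (KD _ Kx') _.
    by rewrite (lt_trans xx') // ltr_pdivrMr // ltr_pMr // ltr1n.
  rewrite -(subrKA (g x)) (splitr e); apply: le_lt_trans (ler_normD _ _) _.
  by rewrite ltrD ?gdx // distrC.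
case/nbhs_ballP => del del0 Hdel; exists (del / 2) => [|x y Kx Dy xy].
  by rewrite divr_gt0.
have : ball (0 : R) del (del / 2).
  rewrite /ball /= sub0r normrN gtr0_norm ?divr_gt0 //.
  by rewrite ltr_pdivrMr // ltr_pMr // ltr1n.
move/Hdel/(_ x Kx Kx y Dy); apply.
by rewrite gtr0_norm // divr_gt0.
Qed.

Lemma within_continuous_comb (T : topologicalType) (K : set T) (g h : T -> R) c1 c2 :
  {within K, continuous g} -> {within K, continuous h} ->
  {within K, continuous (fun w => c1 * g w + c2 * h w)}.
Proof.
move=> gc hc x.
exact: continuousD (continuousM (cvg_cst c1) (gc x)) (continuousM (cvg_cst c2) (hc x)).
Qed.

Lemma ler_sup_compact_image (T : topologicalType) (K : set T) (f : T -> R) :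
  compact K -> {within K, continuous f} -> forall x, K x -> f x <= sup (f @` K).
Proof.
move=> cK fc x Kx; apply: ub_le_sup; last by exists x.
have /compact_bounded[M [_ MfK]] := continuous_compact fc cK.
exists (M + 1) => y fKy.
by case/ler_normlP: (MfK (M + 1) (ltr_pwDr ltr01 (lexx M)) y fKy).
Qed.

Lemma cvg_sqrt0 (u : nat -> R) (k : R) : 0 <= k -> (forall n, 0 <= u n) ->
  (forall c, 0 < c -> \forall n \near \oo, u n <= k * c ^+ 2) ->
  Num.sqrt (u n) @[n --> \oo] --> 0.
Proof.
move=> k0 u0 u_le; apply/cvgrPdist_le => e e0.
have k1 : 0 < k + 1 by rewrite ltr_wpDl.
apply: filterS (u_le _ (divr_gt0 e0 k1)) => n un.
rewrite sub0r normrN ger0_norm ?sqrtr_ge0 // -(ger0_norm (ltW e0)) -sqrtr_sqr.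
rewrite ler_sqrt ?sqr_ge0 // (le_trans un) // expr_div_n mulrA ler_pdivrMr ?exprn_gt0 //.
by rewrite mulrC ler_wpM2l ?sqr_ge0 //; nra.
Qed.

End continuity.

Section euclidean_norm.
Variables (R : realType) (n : nat).
Implicit Types u v : 'cV[R]_n.

Lemma enorm_sqE v : enorm v ^+ 2 = \sum_i v i 0 ^+ 2.
Proof. by rewrite sqr_sqrtr // sumr_ge0 // => i _; rewrite sqr_ge0. Qed.

Lemma enorm_ge0 v : 0 <= enorm v.
Proof. exact: sqrtr_ge0. Qed.

Lemma enormN v : enorm (- v) = enorm v.
Proof. by congr Num.sqrt; apply: eq_bigr => i _; rewrite mxE sqrrN. Qed.

Lemma enorm0 : enorm (0 : 'cV[R]_n) = 0.
Proof. by rewrite /enorm big1 ?sqrtr0 // => i _; rewrite mxE expr0n. Qed.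

Lemma ler_entry_enorm v i : `|v i 0| <= enorm v.
Proof.
rewrite -sqrtr_sqr ler_sqrt ?sumr_ge0 // => [|j _]; last by rewrite sqr_ge0.
by rewrite (bigD1 i) //= lerDl sumr_ge0 // => j _; rewrite sqr_ge0.
Qed.

Lemma ler_entryB_enorm u v i : `|u i 0 - v i 0| <= enorm (u - v).
Proof. by have := ler_entry_enorm (u - v) i; rewrite !mxE. Qed.

Lemma enorm_sqD_le u v : enorm (u + v) ^+ 2 <= 2 * enorm u ^+ 2 + 2 * enorm v ^+ 2.
Proof.
have sqD (x y : R) : (x + y) ^+ 2 <= 2 * x ^+ 2 + 2 * y ^+ 2.
  by have := sqr_ge0 (x - y); rewrite !expr2; nra.
by rewrite !enorm_sqE !mulr_sumr -big_split ler_sum // => i _; rewrite mxE sqD.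
Qed.

Lemma enorm_sq_le_entry v (c : R) : (forall i, `|v i 0| <= c) ->
  enorm v ^+ 2 <= n%:R * c ^+ 2.
Proof.
move=> vc; rewrite enorm_sqE mulr_natl -[n in _ *+ n]card_ord -sumr_const.
apply: ler_sum => i _; rewrite -real_normK ?num_real // lerXn2r ?nnegrE //.
exact: le_trans (vc i).
Qed.

Definition mx_sqbound (M : 'M[R]_n) : R := \sum_i (\sum_j `|M i j|) ^+ 2.

Lemma mx_sqbound_ge0 M : 0 <= mx_sqbound M.
Proof. by rewrite sumr_ge0 // => i _; rewrite sqr_ge0. Qed.

Lemma enorm_sq_mulmx_le M v : enorm (M *m v) ^+ 2 <= mx_sqbound M * enorm v ^+ 2.
Proof.
rewrite [X in X <= _]enorm_sqE mulr_suml ler_sum // => i _.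
have Mv : `|(M *m v) i 0| <= (\sum_j `|M i j|) * enorm v.
  rewrite mxE mulr_suml (le_trans (ler_norm_sum _ _ _)) // ler_sum // => j _.
  by rewrite normrM ler_wpM2l ?ler_entry_enorm.
rewrite -exprMn -real_normK ?num_real // lerXn2r ?nnegrE //.
by rewrite mulr_ge0 ?enorm_ge0 ?sumr_ge0.
Qed.

Lemma continuous_enorm : continuous (fun v : 'cV[R]_n => enorm v).
Proof.
have sum_cont : continuous (fun v : 'cV[R]_n => \sum_i v i 0 ^+ 2).
  apply: (continuous_big (op := +%R) (x0 := 0)) => [|i _ v]; first exact: add_continuous.
  exact: continuous_comp (@coord_continuous R n 1 i 0 v) (@exprn_continuous R 2 _).
by move=> v; exact: continuous_comp (sum_cont v) (@sqrt_continuous R _).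
Qed.

Lemma continuous_enorm_sq : continuous (fun v : 'cV[R]_n => enorm v ^+ 2).
Proof.
move=> v; apply: (@continuous_comp _ _ _ (fun v : 'cV[R]_n => enorm v) (fun x : R => x ^+ 2)).
  exact: continuous_enorm.
exact: exprn_continuous.
Qed.

End euclidean_norm.

Section column_continuity.
Variable R : realType.

Lemma cvg_colP (T : Type) (F : set_system T) {FF : Filter F} n (f : T -> 'cV[R]_n)
    (v : 'cV[R]_n) :
  f @ F --> v <-> forall i, (fun t => f t i 0) @ F --> v i 0.
Proof.
split=> [fv i|fv]; first exact: cvg_comp _ _ fv (@coord_continuous R n 1 i 0 v).
move=> A vA; have [P Pv PA] : exists2 P : 'I_n -> 'I_1 -> set R,
    (forall i j, nbhs (v i j) (P i j)) &
    [set M : 'cV[R]_n | forall i j, P i j (M i j)] `<=` A := vA.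
apply: filterS (filter_forall FF (fun i => fv i (P i 0) (Pv i 0))).
by move=> t Pt; apply: PA => i j; rewrite (ord1 j); exact: Pt.
Qed.

Variables (T : topologicalType) (K : set T).

Lemma within_continuous_colP n (f : T -> 'cV[R]_n) :
  {within K, continuous f} <-> forall i, {within K, continuous (fun t => f t i 0)}.
Proof.
split=> [fc i x|fc x]; first by have /cvg_colP := fc x; apply.
by apply/cvg_colP => i; exact: fc.
Qed.

Lemma within_continuous_mulmx m n (M : 'M[R]_(m, n)) (v : T -> 'cV[R]_n) :
  {within K, continuous v} -> {within K, continuous (fun t => M *m v t)}.
Proof.
move=> /within_continuous_colP vc; apply/within_continuous_colP => i.
rewrite (_ : (fun t => _) = fun t => \sum_j M i j * v t j 0); last first.
  by apply/funext => t; rewrite mxE.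
apply: (continuous_big (op := +%R) (x0 := 0)) => [|j _ t]; first exact: add_continuous.
exact: continuousM (cvg_cst _) (vc j t).
Qed.

Lemma ler_enorm_sup n (v : T -> 'cV[R]_n) : compact K -> {within K, continuous v} ->
  forall t, K t -> enorm (v t) <= sup [set enorm (v t) | t in K].
Proof.
move=> cK vc t Kt; apply: (ler_sup_compact_image (f := fun t => enorm (v t))) Kt => //.
apply: (@within_continuous_comp _ _ _ K v (fun u : 'cV[R]_n => enorm u)) vc => u _.
exact: continuous_enorm.
Qed.

Lemma within_continuous_enorm_sq n (v : T -> 'cV[R]_n) :
  {within K, continuous v} -> {within K, continuous (fun t => enorm (v t) ^+ 2)}.
Proof.
apply: (@within_continuous_comp _ _ _ K v (fun u : 'cV[R]_n => enorm u ^+ 2)) => x _.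
exact: continuous_enorm_sq.
Qed.

End column_continuity.

Section max_norm.
Variables (R : realType) (m n : nat).
Implicit Types M : 'M[R]_(m, n).

Lemma ler_entry_mx_norm M i j : `|M i j| <= `|M|.
Proof. by rewrite [`|M|]mx_normrE; apply/bigmax_geP; right; exists (i, j). Qed.

Lemma mx_norm_le M c : 0 <= c -> (forall i j, `|M i j| <= c) -> `|M| <= c.
Proof. by move=> c0 Mc; rewrite [`|M|]mx_normrE; apply/bigmax_leP; split=> // -[i j]. Qed.

End max_norm.

Section cube_slices.
Variables (R : realType) (a b : R).

Definition row_cons d (t : R) (y : 'rV[R]_d) : 'rV[R]_d.+1 :=
  row_mx (const_mx t : 'rV[R]_1) y.

Lemma Omega_row_cons d t (y : 'rV[R]_d) :
  Omega d.+1 a b (row_cons t y) <-> a <= t <= b /\ Omega d a b y.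
Proof.
split=> [Oty|[abt Oy] j]; last by rewrite mxE; case: fintype.split => k; rewrite ?mxE.
split; first by have := Oty (@lshift 1 d ord0); rewrite mxE (unsplitK (inl _ _)) mxE.
by move=> j; have := Oty (@rshift 1 d j); rewrite mxE (unsplitK (inr _ _)).
Qed.

Lemma norm_row_consBl d t t' (y : 'rV[R]_d) :
  `|row_cons t y - row_cons t' y| <= `|t - t'|.
Proof.
apply: mx_norm_le => // i j; rewrite !mxE.
by case: fintype.split => k; rewrite ?mxE ?subrr ?normr0.
Qed.

Lemma norm_row_consBr d t (y y' : 'rV[R]_d) :
  `|row_cons t y - row_cons t y'| <= `|y - y'|.
Proof.
apply: mx_norm_le => // i j; rewrite !mxE.
case: fintype.split => k; rewrite ?mxE ?subrr ?normr0 //.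
by have := ler_entry_mx_norm (y - y') i k; rewrite !mxE.
Qed.

Lemma Omega_compact d : compact (Omega d a b).
Proof.
rewrite (_ : Omega d a b = [set v | forall i, `[a, b]%classic (v ord0 i)]).
  by apply: (@rV_compact _ _ (fun=> `[a, b]%classic)) => i; exact: segment_compact.
by apply/seteqP; split=> v /= Ov i; have := Ov i; rewrite /= in_itv.
Qed.

Lemma within_continuous_slice d (g : 'rV[R]_d.+1 -> R) t :
  {within Omega d.+1 a b, continuous g} -> a <= t <= b ->
  {within Omega d a b, continuous (fun y => g (row_cons t y))}.
Proof.
move=> /within_continuousP gc abt; apply/within_continuousP => y Oy e e0.
have [del del0 gdel] := gc _ (proj2 (Omega_row_cons t y) (conj abt Oy)) e e0.
exists del => // y' Oy' yy'; apply: gdel; first exact/Omega_row_cons.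
exact: le_lt_trans (norm_row_consBr _ _ _) yy'.
Qed.

End cube_slices.

Section cube_integral.
Variables (R : realType) (a b : R).
Hypothesis ab : a < b.
Local Notation mu := (@lebesgue_measure R).
Local Notation Iab := [set t : R | a <= t <= b].
Local Notation cont d g := {within Omega d a b, continuous g}.

Let Iab_itv : Iab = [set` `[a, b]].
Proof. by apply/seteqP; split=> t /=; rewrite in_itv. Qed.

Let measurable_Iab : measurable Iab.
Proof. by rewrite Iab_itv; exact: measurable_itv. Qed.

Let lebesgue_measure_Iab : fine (lebesgue_measure Iab) = b - a.
Proof. by rewrite Iab_itv lebesgue_measure_itv /= lte_fin ab. Qed.

Let compact_Iab : compact Iab.
Proof. by rewrite Iab_itv; exact: segment_compact. Qed.

Lemma cube_intS d (g : 'rV[R]_d.+1 -> R) :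
  cube_int a b g = Rintegral mu Iab (fun t => cube_int a b (fun y => g (row_cons t y))).
Proof. by []. Qed.

Lemma cube_int_cst d (c : R) : cube_int a b (fun _ : 'rV[R]_d => c) = c * (b - a) ^+ d.
Proof.
elim: d => [|d IH]; first by rewrite /= expr0 mulr1.
rewrite cube_intS (@eq_Rintegral _ _ _ _ _ (fun=> c * (b - a) ^+ d)) => [|t _].
  by rewrite Rintegral_cst // exprSr mulrA lebesgue_measure_Iab.
exact: IH.
Qed.

Section slice_integral.
Variable d : nat.
Hypothesis cube_int_comb : forall (g h : 'rV[R]_d -> R) c1 c2, cont d g -> cont d h ->
  cube_int a b (fun w => c1 * g w + c2 * h w) = c1 * cube_int a b g + c2 * cube_int a b h.
Hypothesis cube_int_ge0 : forall g : 'rV[R]_d -> R, cont d g ->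
  (forall w, Omega d a b w -> 0 <= g w) -> 0 <= cube_int a b g.

Lemma cube_int_norm_le (g : 'rV[R]_d -> R) (c : R) : cont d g ->
  (forall w, Omega d a b w -> `|g w| <= c) -> `|cube_int a b g| <= c * (b - a) ^+ d.
Proof.
move=> gc gc_le; have cc : cont d (fun=> c) by move=> ?; exact: cvg_cst.
rewrite ler_norml -!cube_int_cst; apply/andP; split.
  rewrite -subr_ge0 opprK -[cube_int a b g]mul1r -[cube_int _ _ (fun=> c)]mul1r.
  rewrite -cube_int_comb //; apply: cube_int_ge0 => [|w /gc_le].
    exact: within_continuous_comb.
  by rewrite ler_norml => /andP[]; lra.
rewrite -subr_ge0 -[cube_int _ _ (fun=> c)]mul1r -mulN1r -cube_int_comb //.
apply: cube_int_ge0 => [|w /gc_le]; first exact: within_continuous_comb.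
by rewrite ler_norml => /andP[]; lra.
Qed.

Lemma continuous_cube_int_slice (g : 'rV[R]_d.+1 -> R) : cont d.+1 g ->
  {within Iab, continuous (fun t => cube_int a b (fun y => g (row_cons t y)))}.
Proof.
move=> gc; apply/within_continuousP => x abx e e0.
have vol1 : 0 < (b - a) ^+ d + 1 by rewrite ltr_wpDl // exprn_ge0 // subr_ge0 ltW.
have [del del0 gdel] := compact_unif_continuous (@Omega_compact _ a b d.+1)
  (@subset_refl _ _) gc (divr_gt0 e0 vol1).
exists del => // t abt xt.
have [xc tc] := (within_continuous_slice gc abx, within_continuous_slice gc abt).
rewrite -[X in `|X - _|]mul1r -mulN1r -cube_int_comb //.
apply: (le_lt_trans (cube_int_norm_le (c := e / ((b - a) ^+ d + 1)) _ _)).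
- exact: within_continuous_comb.
- move=> y Oy; rewrite mul1r mulN1r ltW // gdel //; try exact/Omega_row_cons.
  exact: le_lt_trans (norm_row_consBl _ _ _) xt.
- by rewrite mulrAC ltr_pdivrMr // ltr_pM2l // ltrDl.
Qed.

End slice_integral.

Lemma cube_int_linear_ge0 d :
  (forall (g h : 'rV[R]_d -> R) c1 c2, cont d g -> cont d h ->
     cube_int a b (fun w => c1 * g w + c2 * h w) =
       c1 * cube_int a b g + c2 * cube_int a b h) /\
  (forall g : 'rV[R]_d -> R, cont d g ->
     (forall w, Omega d a b w -> 0 <= g w) -> 0 <= cube_int a b g).
Proof.
elim: d => [|d [cube_int_comb cube_int_ge0]].
  by split=> // g _ g0; apply: g0 => -[].
have slice_int g : cont d.+1 g ->
    mu.-integrable Iab (EFin \o fun t => cube_int a b (fun y => g (row_cons t y))).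
  move=> gc; apply: continuous_compact_integrable compact_Iab _.
  exact: continuous_cube_int_slice.
have slice_intZ g c : cont d.+1 g ->
    mu.-integrable Iab (EFin \o fun t => c * cube_int a b (fun y => g (row_cons t y))).
  move=> /(continuous_cube_int_slice cube_int_comb cube_int_ge0) sc.
  apply: continuous_compact_integrable compact_Iab _.
  (* stated at codomain [R]; the goal is at [R^o] *)
  have : {within Iab, continuous (fun t => c * cube_int a b (fun y => g (row_cons t y)))}.
    by move=> t; exact: continuousM (cvg_cst c) (sc t).
  exact.
split=> [g h c1 c2 gc hc|g gc g0]; rewrite !cube_intS.
  rewrite -!RintegralZl -?RintegralD ?slice_int ?slice_intZ //.
  apply: eq_Rintegral => t /[!inE] abt.
  by apply: cube_int_comb; exact: within_continuous_slice.
apply: Rintegral_ge0 => t abt; apply: cube_int_ge0 => [|y Oy].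
  exact: within_continuous_slice.
exact/g0/Omega_row_cons.
Qed.

Section uniform_expectation.
Variable d : nat.

Lemma Eunif_comb (g h : 'rV[R]_d -> R) c1 c2 : cont d g -> cont d h ->
  Eunif a b (fun w => c1 * g w + c2 * h w) = c1 * Eunif a b g + c2 * Eunif a b h.
Proof. by move=> gc hc; rewrite /Eunif (cube_int_linear_ge0 d).1 // mulrDl !mulrA. Qed.

Lemma Eunif_cst c : Eunif a b (fun _ : 'rV[R]_d => c) = c.
Proof. by rewrite /Eunif cube_int_cst mulfK // expf_neq0 // subr_eq0 gt_eqF. Qed.

Lemma Eunif_ge0 (g : 'rV[R]_d -> R) : cont d g ->
  (forall w, Omega d a b w -> 0 <= g w) -> 0 <= Eunif a b g.
Proof.
move=> gc g0; apply: divr_ge0; last by rewrite exprn_ge0 // subr_ge0 ltW.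
exact: (cube_int_linear_ge0 d).2.
Qed.

Lemma ler_Eunif (g h : 'rV[R]_d -> R) : cont d g -> cont d h ->
  (forall w, Omega d a b w -> g w <= h w) -> Eunif a b g <= Eunif a b h.
Proof.
move=> gc hc gh; rewrite -subr_ge0 -[Eunif _ _ h]mul1r -mulN1r -Eunif_comb //.
apply: Eunif_ge0 => [|w Ow]; first exact: within_continuous_comb.
by rewrite mul1r mulN1r subr_ge0 gh.
Qed.

End uniform_expectation.

End cube_integral.

Section forcing_term.
Variable R : realType.
Local Notation mu := (@lebesgue_measure R).
Local Notation I := (@Iset R).

Let measurable_Iset : measurable I.
Proof.
rewrite (_ : I = [set` `]-1, 1[%R]); first exact: measurable_itv.
by apply/seteqP; split=> x /=; rewrite in_itv.
Qed.

Let integrableB_fun (g h : R -> R) : mu.-integrable I (EFin \o g) ->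
  mu.-integrable I (EFin \o h) -> mu.-integrable I (EFin \o (fun x => g x - h x)).
Proof.
move=> gi hi; rewrite (_ : _ \o _ = ((EFin \o g) \- (EFin \o h))%E).
  exact: integrableB.
by apply/funext => x /=; rewrite EFinB.
Qed.

Let integrableZl_fun (g : R -> R) c : mu.-integrable I (EFin \o g) ->
  mu.-integrable I (EFin \o (fun x => c * g x)).
Proof.
move=> gi; rewrite (_ : _ \o _ = (fun x => c%:E * (EFin \o g) x)%E).
  exact: integrableZl.
by apply/funext => x /=; rewrite EFinM.
Qed.

Lemma poly_bounded_Iset (p : {poly R}) :
  exists2 B, 0 <= B & forall x, I x -> `|p.[x]| <= B.
Proof.
exists (\sum_(i < size p) `|p`_i|) => [|x /andP[x_gt x_lt]]; first exact: sumr_ge0.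
rewrite horner_coef (le_trans (ler_norm_sum _ _ _)) // ler_sum // => i _.
rewrite normrM normrX ler_piMr // exprn_ile1 //.
by rewrite ler_norml !ltW.
Qed.

Lemma integrable_mul_poly (g : R -> R) (p : {poly R}) :
  mu.-integrable I (EFin \o g) -> mu.-integrable I (EFin \o (fun x => g x * p.[x])).
Proof.
move=> gi; rewrite (_ : _ \o _ = ((EFin \o g) \* (EFin \o horner p))%E).
  apply: integrableMl => //; first exact: measurable_poly.
  have [B _ pB] := poly_bounded_Iset p.
  exists B; split; first exact: num_real.
  by move=> M BM x Ix; apply: le_trans (pB x Ix) (ltW BM).
by apply/funext => x /=; rewrite EFinM.
Qed.

Lemma norm_Rintegral_mul_polyB_le (g h : R -> R) (p : {poly R}) B :
  mu.-integrable I (EFin \o g) -> mu.-integrable I (EFin \o h) ->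
  (forall x, I x -> `|p.[x]| <= B) ->
  `|Rintegral mu I (fun x => g x * p.[x]) - Rintegral mu I (fun x => h x * p.[x])|
    <= B * Rintegral mu I (fun x => `|g x - h x|).
Proof.
move=> gi hi pB; have ghi := integrableB_fun gi hi.
have ghpi := integrableB_fun (integrable_mul_poly p gi) (integrable_mul_poly p hi).
rewrite -RintegralB ?integrable_mul_poly // -RintegralZl //; last exact: integrable_norm.
apply: le_trans (le_normr_Rintegral _ ghpi) _ => //.
apply: le_Rintegral => //; [exact: integrable_norm|exact/integrableZl_fun/integrable_norm|].
move=> x Ix; rewrite -mulrBl normrM mulrC ler_wpM2r //.
exact: pB.
Qed.

Lemma within_continuous_Rintegral_mul_poly d (Om : set 'rV[R]_d) f (p : {poly R}) :
  cont_L1 Om f ->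
  {within Om, continuous (fun w => Rintegral mu I (fun x => f w x * p.[x]))}.
Proof.
case=> fi fc; apply/subspace_continuousP => w0 Ow0; apply/cvgrPdist_le => e e0.
have [B B0 pB] := poly_bounded_Iset p.
have eB : 0 < e / (B + 1) by rewrite divr_gt0 // ltr_wpDl.
move/cvgrPdist_le/(_ _ eB): (fc w0 Ow0) => near_fw.
apply: filterS2 near_fw (withinT Om (nbhs_filter w0)) => w fw Ow.
rewrite sub0r normrN in fw.
apply: le_trans (norm_Rintegral_mul_polyB_le (fi w0 Ow0) (fi w Ow) pB) _.
apply: le_trans (_ : B * (e / (B + 1)) <= e).
  rewrite ler_wpM2l //; apply: le_trans (ler_norm _) _.
  by under eq_Rintegral do rewrite distrC.
by rewrite mulrA ler_pdivrMr ?ltr_wpDl //; nra.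
Qed.

Lemma within_continuous_Fvec d (Om : set 'rV[R]_d) ak bk N f : cont_L1 Om f ->
  {within Om, continuous (Fvec ak bk N f)}.
Proof.
move=> fL1; apply/within_continuous_colP => j.
rewrite (_ : (fun w => _) = fun w => Rintegral mu I (fun x => f w x * (phi ak bk j.+1).[x])).
  exact: within_continuous_Rintegral_mul_poly.
by apply/funext => w; rewrite mxE.
Qed.

End forcing_term.

Section squashing.
Variables (R : realType) (sigma : R -> R) (C : R).
Hypothesis sigma_bounded : exists M : R, forall x, `|sigma x| <= M.
Hypothesis sigma_continuous : continuous sigma.
Hypothesis sigma_inj : injective sigma.
Hypothesis C_gt0 : 0 < C.

Local Notation sp := (sigma_plus sigma).
Local Notation sm := (sigma_minus sigma).

Lemma continuous_haff : continuous (haff C sigma).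
Proof.
move=> s; rewrite (_ : haff C sigma = fun s => - C + 2 * C / (sp - sm) * (s - sm)).
  apply: cvgD; first exact: cvg_cst.
  by apply: cvgM; [exact: cvg_cst|apply: cvgB; [exact: cvg_id|exact: cvg_cst]].
by apply/funext => t; rewrite /haff mulrAC.
Qed.

Lemma continuous_squash : continuous (haff C sigma \o sigma).
Proof.
move=> x; apply: (@continuous_comp _ _ _ sigma (haff C sigma)); first exact: sigma_continuous.
exact: continuous_haff.
Qed.

Let range_has_ubound : has_ubound (range sigma).
Proof.
by case: sigma_bounded => M sM; exists M => _ [x _ <-]; case/ler_normlP: (sM x).
Qed.

Let range_has_lbound : has_lbound (range sigma).
Proof.
case: sigma_bounded => M sM; exists (- M) => _ [x _ <-].
by rewrite lerNl; case/ler_normlP: (sM x).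
Qed.

Lemma range_sigma_is_interval : is_interval (range sigma).
Proof.
apply/connected_intervalP/connected_continuous_connected.
  by apply/connected_intervalP.
exact: continuous_subspaceT.
Qed.

Lemma sigma_minus_le x : sm <= sigma x.
Proof. by apply: ge_inf => //; exists x. Qed.

Lemma sigma_plus_ge x : sigma x <= sp.
Proof. by apply: ub_le_sup => //; exists x. Qed.

Lemma sigma_minus_lt_plus : sm < sp.
Proof.
have s01 : sigma 0 != sigma 1 by apply/eqP => /sigma_inj/eqP; rewrite eq_sym oner_eq0.
case: (ltgtP (sigma 0) (sigma 1)) s01 => // [s01|s10] _.
  exact: le_lt_trans (sigma_minus_le 0) (lt_le_trans s01 (sigma_plus_ge 1)).
exact: le_lt_trans (sigma_minus_le 1) (lt_le_trans s10 (sigma_plus_ge 0)).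
Qed.

Lemma range_sigma_itv y : sm < y < sp -> range sigma y.
Proof.
move=> ys; apply: interior_subset.
by rewrite interval_bounded_interior //; exact: range_sigma_is_interval.
Qed.

Definition haff_inv (y : R) : R := sm + (y + C) * ((sp - sm) / (2 * C)).

Let haff_slope_gt0 : 0 < (sp - sm) / (2 * C).
Proof. by rewrite divr_gt0 ?mulr_gt0 ?subr_gt0 ?sigma_minus_lt_plus. Qed.

Lemma haff_invK y : haff C sigma (haff_inv y) = y.
Proof.
have spm : sp - sm != 0 by rewrite subr_eq0 gt_eqF // sigma_minus_lt_plus.
have C0 : C != 0 by rewrite gt_eqF.
by rewrite /haff /haff_inv; field; apply/andP.
Qed.

Lemma ler_haff_inv y1 y2 : y1 <= y2 -> haff_inv y1 <= haff_inv y2.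
Proof. by move=> y12; rewrite lerD2l ler_pM2r // lerD2r. Qed.

Lemma haff_inv_in_range y : - C < y < C -> range sigma (haff_inv y).
Proof.
move=> /andP[Cy yC]; apply/range_sigma_itv/andP; split.
  by rewrite ltrDl mulr_gt0 // -ltrBlDr sub0r.
rewrite [X in _ < X](_ : sp = sm + (C + C) * ((sp - sm) / (2 * C))); last first.
  by field; rewrite gt_eqF.
by rewrite ltrD2l ltr_pM2r // ltrD2r.
Qed.

Lemma continuous_haff_inv : continuous haff_inv.
Proof.
move=> y; apply: cvgD; first exact: cvg_cst.
by apply: cvgM; [apply: cvgD; [exact: cvg_id|exact: cvg_cst]|exact: cvg_cst].
Qed.

End squashing.

Section squashed_approximation.
Variables (R : realType) (sigma sinv : R -> R) (C : R).
Hypothesis sigma_bounded : exists M : R, forall x, `|sigma x| <= M.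
Hypothesis sigma_continuous : continuous sigma.
Hypothesis sigmaK : cancel sigma sinv.
Hypothesis sinv_continuous : {within range sigma, continuous sinv}.
Hypothesis C_gt0 : 0 < C.

Let sigma_inj : injective sigma := can_inj sigmaK.

Lemma within_continuous_NNclass d N (Nstar : nat -> set ('rV[R]_d -> 'cV[R]_(N.-1)))
    n beta (K : set 'rV[R]_d) :
  (forall g, Nstar n g -> continuous g) -> NNclass C sigma Nstar n beta ->
  {within K, continuous beta}.
Proof.
move=> Ncont [g /Ncont gc <-]; apply/within_continuous_colP => i.
apply: continuous_subspaceT => w.
rewrite (_ : (fun t => _) = (haff C sigma \o sigma) \o (fun t => g t i 0)); last first.
  by apply/funext => t; rewrite mxE.
apply: continuous_comp; first exact: continuous_comp (gc w) (@coord_continuous R _ 1 i 0 _).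
exact: continuous_squash.
Qed.

Definition squash_lift (T : Type) n (alpha : T -> 'cV[R]_n) (w : T) : 'cV[R]_n :=
  \col_i sinv (haff_inv sigma C (alpha w i 0)).

Variables (d N : nat) (K : set 'rV[R]_d) (alpha : 'rV[R]_d -> 'cV[R]_(N.-1)) (S : R).
Hypothesis alpha_continuous : {within K, continuous alpha}.
Hypothesis alpha_bounded : forall w i, K w -> `|alpha w i 0| <= S.
Hypothesis S_ge0 : 0 <= S.
Hypothesis S_lt_C : S < C.

Let haff_inv_alpha_in_range w i : K w -> range sigma (haff_inv sigma C (alpha w i 0)).
Proof.
move=> /(alpha_bounded i) /ler_normlP[Sa aS]; apply: haff_inv_in_range => //.
by rewrite -ltrNl (le_lt_trans Sa) ?(le_lt_trans aS).
Qed.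

Lemma squash_liftK w i : K w ->
  haff C sigma (sigma (squash_lift alpha w i 0)) = alpha w i 0.
Proof.
move=> /(haff_inv_alpha_in_range i)[x _ xa].
by rewrite mxE -xa sigmaK xa haff_invK.
Qed.

Lemma within_continuous_squash_lift : {within K, continuous (squash_lift alpha)}.
Proof.
apply/within_continuous_colP => i.
rewrite (_ : (fun w => _) = sinv \o (fun w => haff_inv sigma C (alpha w i 0))); last first.
  by apply/funext => w; rewrite mxE.
apply: within_continuous_comp_within sinv_continuous => [|w Kw]; last first.
  exact: haff_inv_alpha_in_range.
apply: (@within_continuous_comp _ _ _ _ (fun w => alpha w i 0)).
  by move=> y _; exact: continuous_haff_inv.
by move: i; apply/within_continuous_colP.
Qed.

Lemma squash_lift_in_compact :
  exists2 L, compact L & forall w i, K w -> L (squash_lift alpha w i 0).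
Proof.
set J := [set y | haff_inv sigma C (- S) <= y <= haff_inv sigma C S].
have JS : J `<=` range sigma.
  move=> y Jy; apply: (range_sigma_is_interval sigma_continuous _ _ Jy).
    by apply: haff_inv_in_range; rewrite // ltrN2 S_lt_C (le_lt_trans _ C_gt0) // oppr_le0.
  by apply: haff_inv_in_range; rewrite // S_lt_C (lt_le_trans _ S_ge0) // oppr_lt0.
exists (sinv @` J) => [|w i Kw].
  apply: continuous_compact; first exact: continuous_subspaceW JS sinv_continuous.
  rewrite (_ : J = `[haff_inv sigma C (- S), haff_inv sigma C S]%classic).
    exact: segment_compact.
  by apply/seteqP; split=> y; rewrite /= in_itv.
rewrite mxE; exists (haff_inv sigma C (alpha w i 0)) => //.
by case/ler_normlP: (alpha_bounded i Kw) => Sa aS; rewrite /J /= !ler_haff_inv // lerNl.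
Qed.

Lemma NNclass_approx (Nstar : nat -> set ('rV[R]_d -> 'cV[R]_(N.-1))) :
  compact K -> universal_approx Nstar ->
  forall c, 0 < c -> \forall k \near \oo, exists2 beta, NNclass C sigma Nstar k beta &
    forall w i, K w -> `|beta w i 0 - alpha w i 0| <= c.
Proof.
move=> cK UA c c0; have [L cL Lg] := squash_lift_in_compact.
have [del del0 phi_del] := compact_unif_continuous cL (@subsetT _ L)
  (continuous_subspaceT (@continuous_squash R sigma C sigma_continuous)) c0.
apply: filterS (UA K cK _ within_continuous_squash_lift del del0) => k [gh Ngh gh_del].
exists (fun w => map_mx (haff C sigma \o sigma) (gh w)); first by exists gh.
move=> w i Kw; rewrite mxE -(squash_liftK i Kw) distrC ltW // phi_del //; first exact: Lg.
by rewrite distrC (le_lt_trans (ler_entryB_enorm _ _ i) (gh_del w Kw)).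
Qed.

End squashed_approximation.

Section loss_estimates.
Variables (R : realType) (a b : R) (d N : nat).
Variables (A : 'M[R]_(N.-1)) (F alpha : 'rV[R]_d -> 'cV[R]_(N.-1)).
Hypothesis ab : a < b.
Hypothesis A_unit : A \in unitmx.
Hypothesis F_continuous : {within Omega d a b, continuous F}.
Hypothesis alpha_continuous : {within Omega d a b, continuous alpha}.
Local Notation cont f := {within Omega d a b, continuous f}.
Local Notation L2sq beta gamma :=
  (Eunif a b (fun w => enorm (beta w - gamma w) ^+ 2)).

Let contB (u v : 'rV[R]_d -> 'cV[R]_(N.-1)) : cont u -> cont v -> cont (fun w => u w - v w).
Proof. by move=> uc vc x; exact: cvgB (uc x) (vc x). Qed.

Let cont_residual (beta : 'rV[R]_d -> 'cV[R]_(N.-1)) :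
  cont beta -> cont (fun w => enorm (A *m beta w - F w) ^+ 2).
Proof.
by move=> bc; apply/within_continuous_enorm_sq/contB/F_continuous/within_continuous_mulmx.
Qed.

Lemma loss_le0_of_min :
  (forall beta, cont beta -> loss a b A F alpha <= loss a b A F beta) ->
  loss a b A F alpha <= 0.
Proof.
move=> alpha_min; have := alpha_min _ (within_continuous_mulmx (M := invmx A) F_continuous).
move/le_trans; apply; rewrite /loss (_ : (fun w => _) = fun=> 0) ?Eunif_cst //.
by apply/funext => w; rewrite mulmxA mulmxV // mul1mx subrr enorm0 expr0n.
Qed.

Hypothesis loss_alpha_le0 : loss a b A F alpha <= 0.

Lemma loss_le_L2 (beta : 'rV[R]_d -> 'cV[R]_(N.-1)) : cont beta ->
  loss a b A F beta <= 2 * mx_sqbound A * L2sq beta alpha.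
Proof.
move=> bc; have ba := within_continuous_enorm_sq (contB bc alpha_continuous).
have ra := cont_residual alpha_continuous.
apply: le_trans (_ : Eunif a b (fun w => (2 * mx_sqbound A) * enorm (beta w - alpha w) ^+ 2
    + 2 * enorm (A *m alpha w - F w) ^+ 2) <= _).
  apply: ler_Eunif => //; [exact: cont_residual|exact: within_continuous_comb|move=> w _].
  rewrite (_ : A *m beta w - F w = A *m (beta w - alpha w) + (A *m alpha w - F w)).
    apply: le_trans (enorm_sqD_le _ _) _; rewrite lerD2r -mulrA ler_pM2l //.
    exact: enorm_sq_mulmx_le.
  by rewrite mulmxBr addrA subrK.
by rewrite Eunif_comb // gerDl pmulr_rle0.
Qed.

Lemma L2_le_loss (beta : 'rV[R]_d -> 'cV[R]_(N.-1)) : cont beta ->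
  L2sq alpha beta <= 2 * mx_sqbound (invmx A) * loss a b A F beta.
Proof.
move=> bc; have ab_c := within_continuous_enorm_sq (contB alpha_continuous bc).
have [ra rb] := (cont_residual alpha_continuous, cont_residual bc).
apply: le_trans (_ : Eunif a b (fun w =>
    (2 * mx_sqbound (invmx A)) * enorm (A *m alpha w - F w) ^+ 2
    + (2 * mx_sqbound (invmx A)) * enorm (A *m beta w - F w) ^+ 2) <= _).
  apply: ler_Eunif => //; first exact: within_continuous_comb.
  move=> w _; rewrite (_ : alpha w - beta w =
      invmx A *m ((A *m alpha w - F w) - (A *m beta w - F w))); last first.
    by rewrite opprB addrA subrK -mulmxBr mulmxA mulVmx ?mul1mx.
  apply: le_trans (enorm_sq_mulmx_le _ _) _.
  set K := mx_sqbound _; set u := A *m alpha w - F w; set v := A *m beta w - F w.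
  rewrite (_ : _ + _ = K * (2 * enorm u ^+ 2 + 2 * enorm v ^+ 2)); last by ring.
  by rewrite ler_wpM2l ?mx_sqbound_ge0 // -(enormN v) enorm_sqD_le.
rewrite Eunif_comb // -/(loss a b A F beta) gerDr.
by rewrite mulr_ge0_le0 ?mulr_ge0 ?mx_sqbound_ge0.
Qed.

Lemma L2_le_of_loss_le (beta gamma : 'rV[R]_d -> 'cV[R]_(N.-1)) c :
  cont beta -> cont gamma -> loss a b A F gamma <= loss a b A F beta ->
  (forall w i, Omega d a b w -> `|beta w i 0 - alpha w i 0| <= c) ->
  L2sq alpha gamma <= 4 * mx_sqbound (invmx A) * mx_sqbound A * (N.-1)%:R * c ^+ 2.
Proof.
move=> bc gc gb beta_c.
have L2_beta : L2sq beta alpha <= (N.-1)%:R * c ^+ 2.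
  rewrite -[leRHS](Eunif_cst ab d); apply: ler_Eunif => // [||w Ow].
  - exact/within_continuous_enorm_sq/contB.
  - by move=> x; exact: cvg_cst.
  - by apply: enorm_sq_le_entry => i; rewrite !mxE; exact: beta_c.
have [KA KA'] := (mx_sqbound_ge0 A, mx_sqbound_ge0 (invmx A)).
rewrite (_ : 4 * _ * _ * _ * _ =
  2 * mx_sqbound (invmx A) * (2 * mx_sqbound A * ((N.-1)%:R * c ^+ 2))); last by ring.
apply: le_trans (L2_le_loss gc) _; rewrite ler_wpM2l ?mulr_ge0 // (le_trans gb) //.
by rewrite (le_trans (loss_le_L2 bc)) // ler_wpM2l ?mulr_ge0.
Qed.

End loss_estimates.

Theorem theorem3p2 (R : realType) (d N : nat) (nu a b : R) (ak bk : nat -> R)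
  (f : 'rV[R]_d -> R -> R)
  (Nstar : nat -> set ('rV[R]_d -> 'cV[R]_(N.-1)))
  (sigma : R -> R) (Calpha : R)
  (alpha_star : 'rV[R]_d -> 'cV[R]_(N.-1))
  (alpha_hat : nat -> 'rV[R]_d -> 'cV[R]_(N.-1)) :
  0 <= nu -> 0 < a -> a < b ->
  (Amat nu ak bk N)^T = Amat nu ak bk N ->
  Amat nu ak bk N \in unitmx ->
  cont_L1 (Omega d a b) f ->
  (forall n, Nstar n `<=` Nstar n.+1) ->
  (forall n g, Nstar n g -> continuous g) ->
  universal_approx Nstar ->
  (exists M : R, forall x, `|sigma x| <= M) ->
  continuous sigma ->
  (exists2 sinv : R -> R, (forall x, sinv (sigma x) = x) &
                          {within range sigma, continuous sinv}) ->
  {within Omega d a b, continuous alpha_star} ->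
  (forall beta : 'rV[R]_d -> 'cV[R]_(N.-1), {within Omega d a b, continuous beta} ->
     loss a b (Amat nu ak bk N) (Fvec ak bk N f) alpha_star
     <= loss a b (Amat nu ak bk N) (Fvec ak bk N f) beta) ->
  sup [set enorm (alpha_star w) | w in Omega d a b] < Calpha ->
  (forall n, NNclass Calpha sigma Nstar n (alpha_hat n)) ->
  (forall n beta, NNclass Calpha sigma Nstar n beta ->
     loss a b (Amat nu ak bk N) (Fvec ak bk N f) (alpha_hat n)
     <= loss a b (Amat nu ak bk N) (Fvec ak bk N f) beta) ->
  (fun n => L2dist a b alpha_star (alpha_hat n)) @ \oo --> 0.
Proof.
move=> _ _ ab _ A_unit fL1 _ Ncont UA sigma_bdd sigma_cont [sinv sigmaK sinv_cont]
  alpha_cont alpha_min sup_lt_C hat_in hat_min.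
set A := Amat nu ak bk N; set F := Fvec ak bk N f; set S := sup _ in sup_lt_C.
have F_cont : {within Omega d a b, continuous F} := within_continuous_Fvec fL1.
have loss0 := loss_le0_of_min ab A_unit F_cont alpha_min.
have alpha_S w : Omega d a b w -> enorm (alpha_star w) <= S.
  exact: ler_enorm_sup (@Omega_compact _ a b d) alpha_cont w.
have S0 : 0 <= S.
  have Oa : Omega d a b (const_mx a) by move=> i; rewrite mxE lexx ltW.
  exact: le_trans (enorm_ge0 _) (alpha_S _ Oa).
have alpha_le_S w i : Omega d a b w -> `|alpha_star w i 0| <= S.
  by move=> /alpha_S; apply: le_trans (ler_entry_enorm _ _).
have NN_cont n :
    NNclass Calpha sigma Nstar n `<=` [set beta | {within Omega d a b, continuous beta}].
  by move=> beta; exact: within_continuous_NNclass (Ncont n).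
apply: (cvg_sqrt0 (k := 4 * mx_sqbound (invmx A) * mx_sqbound A * (N.-1)%:R)) => [|n|c c0].
- by rewrite !mulr_ge0 ?mx_sqbound_ge0.
- apply: Eunif_ge0 => // [|w _]; last exact: sqr_ge0.
  apply: within_continuous_enorm_sq => x.
  exact: cvgB (alpha_cont x) (NN_cont _ _ (hat_in n) x).
have C0 : 0 < Calpha := le_lt_trans S0 sup_lt_C.
have := NNclass_approx sigma_bdd sigma_cont sigmaK sinv_cont C0 alpha_cont alpha_le_S S0 sup_lt_C
  (@Omega_compact _ a b d) UA c0.
apply: filterS => n [beta beta_in beta_c].
exact: L2_le_of_loss_le (NN_cont _ _ beta_in) (NN_cont _ _ (hat_in n))
  (hat_min n beta beta_in) beta_c.
Qed.
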